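(* Let $X$ be a topological space equipped with a continuous binary operation $*:X\times X\to X$ and a point $e\in X$ such that $x*e=x=e*x$ and $x*x=x$ for all $x\in X$ (a topological idempotent unitary magma). Then the fundamental group $\pi_1(X,e)$ is trivial. *)

From HB Require Import structures.
From mathcomp Require Import all_boot all_order all_algebra.
From mathcomp Require Import all_classical all_reals topology normedtype.
From mathcomp Require Import Rstruct Rstruct_topology.
From Stdlib Require Import Reals.

Set Implicit Arguments.
Unset Strict Implicit.
Unset Printing Implicit Defensive.

Import Order.TTheory GRing.Theory Num.Theory.
Local Open Scope classical_set_scope.
Local Open Scope ring_scope.

Definition unitI : set R := `[0%R, 1%R].

(* A loop in X based at e: a continuous map I -> X with f 0 = f 1 = e
   (represented as a function R -> X continuous on I). *)
Definition loop (X : topologicalType) (e : X) (f : R -> X) : Prop :=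
  {within unitI, continuous f} /\ f 0%R = e /\ f 1%R = e.

Definition loop_homotopic (X : topologicalType) (e : X) (f g : R -> X) : Prop :=
  exists H : R * R -> X,
    {within unitI `*` unitI, continuous H} /\
    (forall s, unitI s -> H (s, 0%R) = f s /\ H (s, 1%R) = g s) /\
    (forall t, unitI t -> H (0%R, t) = e /\ H (1%R, t) = e).

(* pi_1(X, e) is trivial: every loop at e is homotopic rel endpoints to the
   constant loop, i.e. the set of homotopy classes of loops is a singleton. *)
Definition pi1_trivial (X : topologicalType) (e : X) : Prop :=
  forall f : R -> X, loop e f -> loop_homotopic e f (fun _ => e).

(* At time 1/2 the homotopy passes through the loop s |-> f |2s - 1|, which
   runs f backwards and then forwards; retracting it along itself contracts
   it to e.  It remains to deform f into that loop.  Writing f = e * f, deform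
   the left factor from the constant loop into the backwards-forwards loop,
   and the right factor from f into the loop that waits at e and then runs f
   at double speed.  At the end, on the first half of I the right factor is e,
   so the product is the left factor, and on the second half both factors are
   f (2s - 1), so the product is f (2s - 1) by idempotence. *)
From HB Require Import structures.
From mathcomp Require Import all_boot all_order all_algebra.
From mathcomp Require Import all_classical all_reals topology normedtype.
From mathcomp Require Import Rstruct Rstruct_topology lra.
From Stdlib Require Rdefinitions.

Set Implicit Arguments.
Unset Strict Implicit.
Unset Printing Implicit Defensive.

Import Order.TTheory GRing.Theory Num.Theory.
Local Open Scope classical_set_scope.
Local Open Scope ring_scope.

(* Not imported from Stdlib: that would bind [R_scope] to [R] and parse real
   arithmetic with Stdlib's operations instead of MathComp's. *)
Local Notation R := Rdefinitions.R.

Ltac continuity_real :=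
  repeat lazymatch goal with
  | |- continuous_at _ _ => rewrite /continuous_at
  | |- (fun _ => ?c) @ _ --> _ => exact: cvg_cst
  | |- (fun q => q.1) @ _ --> _ => exact: cvg_fst
  | |- (fun q => q.2) @ _ --> _ => exact: cvg_snd
  | |- (fun q => @?g q + @?h q) @ _ --> _ => apply: (@cvgD _ R^o _ _ _ g h)
  | |- (fun q => - @?g q) @ _ --> _ => apply: (@cvgN _ R^o _ _ _ g)
  | |- (fun q => @?g q * @?h q) @ _ --> _ => apply: (@cvgM _ _ _ _ g h)
  | |- (fun q => `|@?g q|) @ _ --> _ => apply: (@cvg_norm _ R^o _ _ _ g)
  end.

Lemma continuous_if_le (T Y : topologicalType) (g : T -> R) (c : R)
    (h1 h2 : T -> Y) :
  continuous g -> continuous h1 -> continuous h2 ->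
  (forall x, g x = c -> h1 x = h2 x) ->
  continuous (fun x => if g x <= c then h1 x else h2 x).
Proof.
move=> gc h1c h2c h12; apply/continuous_subspace_setT.
pose A := g @^-1` [set r | r <= c]; pose B := g @^-1` [set r | c <= r].
have -> : [set: T] = A `|` B.
  apply/seteqP; split=> x // _; rewrite /A /B /=.
  by case: (lerP (g x) c) => gx; [left | right; exact: ltW].
apply: withinU_continuous.
- exact: (continuous_closedP _).1 gc _ (@closed_le R c).
- exact: (continuous_closedP _).1 gc _ (@closed_ge R c).
- apply: (subspace_eq_continuous (f := h1)); last exact: continuous_subspaceT.
  by move=> x; rewrite inE /A /from_subspace /= => ->.
- apply: (subspace_eq_continuous (f := h2)); last exact: continuous_subspaceT.
  move=> x; rewrite inE /B /from_subspace /= => cgx; case: ifP => // gxc.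
  by rewrite h12 //; apply/eqP; rewrite eq_le gxc cgx.
Qed.

Definition clamp01 (x : R) : R := Num.min (Num.max x 0) 1.

Lemma clamp01_in x : unitI (clamp01 x).
Proof.
rewrite /unitI /= in_itv /= /clamp01; apply/andP; split.
  by rewrite le_min ler01 le_max lexx orbT.
by rewrite ge_min lexx orbT.
Qed.

Lemma clamp01_id x : unitI x -> clamp01 x = x.
Proof.
rewrite /unitI /= in_itv /= => /andP[x0 x1].
by rewrite /clamp01 (max_idPl x0) (min_idPl x1).
Qed.

Lemma clamp01_le0 x : x <= 0 -> clamp01 x = 0.
Proof. by move=> x0; rewrite /clamp01 (max_idPr x0) (min_idPl ler01). Qed.

Lemma clamp01_ge1 x : 1 <= x -> clamp01 x = 1.
Proof.
by move=> x1; rewrite /clamp01 (max_idPl (le_trans ler01 x1)) (min_idPr x1).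
Qed.

Lemma continuous_clamp01 : continuous clamp01.
Proof.
move=> x; have := @continuous_min _ _ (fun y : R => Num.max y 0) (fun=> 1) x.
apply; last exact: cvg_cst.
have := @continuous_max _ _ (fun y : R => y) (fun=> 0) x.
by apply; [exact: cvg_id | exact: cvg_cst].
Qed.

Lemma continuous_comp_clamp01 (Y : topologicalType) (f : R -> Y) :
  {within unitI, continuous f} -> continuous (f \o clamp01).
Proof.
move=> fc x.
apply: (cvg_comp _ _ _ ((subspace_continuousP _ _).1 fc _ (clamp01_in x))).
move=> P /continuous_clamp01 P_near.
have clamp_near : (clamp01 @ x) unitI.
  by apply: (@filterE _ (nbhs x) _ (unitI \o clamp01)) => y; exact: clamp01_in.
by apply: filterS2 clamp_near P_near => y y01 /(_ y01).
Qed.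

Definition fold_reparam (w s : R) : R := 1 - w * (1 - `|2 * s - 1|).

Definition delay_reparam (w s : R) : R := s - w * (1 - s).

Lemma fold_reparam0 s : fold_reparam 0 s = 1.
Proof. by rewrite /fold_reparam mul0r subr0. Qed.

Lemma fold_reparam_at0 w : fold_reparam w 0 = 1.
Proof. by rewrite /fold_reparam mulr0 sub0r normrN normr1 subrr mulr0 subr0. Qed.

Lemma fold_reparam_at1 w : fold_reparam w 1 = 1.
Proof.
by rewrite /fold_reparam mulr1 (_ : 2 - 1 = 1) ?normr1 ?subrr ?mulr0 ?subr0 //; lra.
Qed.

Lemma delay_reparam0 s : delay_reparam 0 s = s.
Proof. by rewrite /delay_reparam mul0r subr0. Qed.

Lemma delay_reparam_at0 w : delay_reparam w 0 = - w.
Proof. by rewrite /delay_reparam subr0 mulr1 sub0r. Qed.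

Lemma delay_reparam_at1 w : delay_reparam w 1 = 1.
Proof. by rewrite /delay_reparam subrr mulr0 subr0. Qed.

Section IdempotentMagma.
Variables (X : topologicalType) (op : X -> X -> X) (e : X).
Hypothesis op_continuous : continuous (fun p : X * X => op p.1 p.2).
Hypothesis op_unit : forall x, op x e = x /\ op e x = x.
Hypothesis op_idem : forall x, op x x = x.

Lemma continuous_op (T : topologicalType) (u v : T -> X) :
  continuous u -> continuous v -> continuous (fun x => op (u x) (v x)).
Proof.
move=> uc vc x.
exact: (@continuous2_cvg _ _ _ _ (nbhs x) _ u v op _ _
  (@op_continuous (u x, v x)) (uc x) (vc x)).
Qed.

Variable f : R -> X.
Hypothesis f_loop : loop e f.

Let F := f \o clamp01.

Let F_continuous : continuous F.
Proof. exact: continuous_comp_clamp01 f_loop.1. Qed.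

Let F_le0 x : x <= 0 -> F x = e.
Proof. by move=> x0; rewrite /F /= clamp01_le0 //; exact: f_loop.2.1. Qed.

Let F_ge1 x : 1 <= x -> F x = e.
Proof. by move=> x1; rewrite /F /= clamp01_ge1 //; exact: f_loop.2.2. Qed.

Let F_in x : unitI x -> F x = f x.
Proof. by move=> x01; rewrite /F /= clamp01_id. Qed.

Definition nullhomotopy (p : R * R) : X :=
  if p.2 <= 1/2 then op (F (fold_reparam (2 * p.2) p.1))
                        (F (delay_reparam (2 * p.2) p.1))
  else F (fold_reparam (2 - 2 * p.2) p.1).

Lemma nullhomotopy_half s :
  op (F (fold_reparam 1 s)) (F (delay_reparam 1 s)) = F (fold_reparam 1 s).
Proof.
rewrite /fold_reparam /delay_reparam !mul1r.
have [s_ge|s_lt] := lerP 0 (2 * s - 1).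
  rewrite ger0_norm //.
  have -> : 1 - (1 - (2 * s - 1)) = 2 * s - 1 by lra.
  by rewrite (_ : s - (1 - s) = 2 * s - 1) ?op_idem //; lra.
by rewrite (F_le0 (x := s - (1 - s))) ?(op_unit _).1 //; lra.
Qed.

Lemma continuous_nullhomotopy : continuous nullhomotopy.
Proof.
have F_comp (g : R * R -> R) : continuous g -> continuous (F \o g).
  by move=> gc p; exact: continuous_comp (gc p) (@F_continuous (g p)).
have fold_up : continuous (fun p : R * R => fold_reparam (2 * p.2) p.1).
  by move=> p; rewrite /fold_reparam; continuity_real.
have delay_up : continuous (fun p : R * R => delay_reparam (2 * p.2) p.1).
  by move=> p; rewrite /delay_reparam; continuity_real.
have fold_down : continuous (fun p : R * R => fold_reparam (2 - 2 * p.2) p.1).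
  by move=> p; rewrite /fold_reparam; continuity_real.
apply: continuous_if_le.
- by move=> p; exact: cvg_snd.
- exact: continuous_op (F_comp _ fold_up) (F_comp _ delay_up).
- exact: F_comp _ fold_down.
- move=> [s t] /= ->.
  have -> : 2 * (1/2) = 1 :> R by lra.
  have -> : 2 - 1 = 1 :> R by lra.
  exact: nullhomotopy_half.
Qed.

Lemma nullhomotopy_start s : unitI s -> nullhomotopy (s, 0) = f s.
Proof.
move=> s01; rewrite /nullhomotopy /= ifT; last by lra.
rewrite mulr0 fold_reparam0 delay_reparam0 F_ge1 // F_in //.
exact: (op_unit _).2.
Qed.

Lemma nullhomotopy_end s : nullhomotopy (s, 1) = e.
Proof.
rewrite /nullhomotopy /= ifN; last by rewrite -ltNge; lra.
by rewrite (_ : 2 - 2 * 1 = 0) ?fold_reparam0 ?F_ge1 //; lra.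
Qed.

Lemma nullhomotopy_left t : 0 <= t -> nullhomotopy (0, t) = e.
Proof.
move=> t0; rewrite /nullhomotopy /= !fold_reparam_at0 F_ge1 //.
case: ifP => // _; rewrite delay_reparam_at0 F_le0; first exact: (op_unit _).1.
by rewrite oppr_le0 mulr_ge0.
Qed.

Lemma nullhomotopy_right t : nullhomotopy (1, t) = e.
Proof.
rewrite /nullhomotopy /= !fold_reparam_at1 F_ge1 //.
by case: ifP => // _; rewrite delay_reparam_at1 F_ge1 ?op_idem.
Qed.

End IdempotentMagma.

Theorem corollary2p1 (X : topologicalType) (op : X -> X -> X) (e : X)
  (hcont : continuous (fun p : X * X => op p.1 p.2))
  (hunit : forall x : X, op x e = x /\ op e x = x)
  (hidem : forall x : X, op x x = x) :
  pi1_trivial e.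
Proof.
move=> f f_loop; exists (nullhomotopy op f); split.
  exact/continuous_subspaceT/(continuous_nullhomotopy hcont hunit hidem f_loop).
(* Vanilla [exact]: the endpoints in [loop_homotopic] are Stdlib's [IZR] numerals,
   only convertible to MathComp's [0] and [1]. *)
split=> [s s01 | t].
  split; first exact (nullhomotopy_start hunit f_loop s01).
  exact (nullhomotopy_end op f_loop s).
rewrite /unitI /= in_itv /= => /andP[t0 _]; split.
  exact (nullhomotopy_left hunit f_loop t0).
exact (nullhomotopy_right hidem f_loop t).
Qed.
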